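(* Let $\nu:S\setminus\{0\}\to C$ and $\nu':S\setminus\{0\}\to C'$ be injective (not necessarily well-ordered) valuations on a $\Bbbk$-vector space $S$, and suppose there is a basis $\mathbf B$ of $S$ adapted to both $\nu$ and $\nu'$. Then for every $a\in C_\nu:=\nu(S\setminus\{0\})$ the minimum $\min\{\nu'(x):x\in S\setminus\{0\},\ \nu(x)=a\}$ exists, and the assignment $a\mapsto$ this minimum defines a bijection $\mathbf K_{\nu',\nu}:C_\nu\to C_{\nu'}:=\nu'(S\setminus\{0\})$ such that $\nu'(b)=\mathbf K_{\nu',\nu}(\nu(b))$ for every basis $\mathbf B$ adapted to both valuations and every $b\in\mathbf B$.
   Context: A valuation on a $\Bbbk$-vector space $S$ with values in a totally ordered set $(C,\le)$ is a map $\nu:S\setminus\{0\}\to C$ such that $\nu(cx)=\nu(x)$ for all $c\in\Bbbk^\times$, $x\ne0$, and $\nu(x+y)\le\max(\nu(x),\nu(y))$ whenever $x,y,x+y\neq 0$. It is injective if there is a basis $\mathbf B$ of $S$ such that $\nu|_{\mathbf B}$ is injective; such a basis is called adapted to $\nu$. *)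

From mathcomp Require Import all_boot all_order all_algebra.
Set Implicit Arguments. Unset Strict Implicit. Unset Printing Implicit Defensive.
Import Order.TTheory GRing.Theory.
Local Open Scope ring_scope.

(* A valuation is given as a total map
   S -> C whose value at 0 is irrelevant (only restrictions to S\{0} matter). *)

Definition is_valuation (k : fieldType) (S : lmodType k) (d : Order.disp_t)
  (C : orderType d) (nu : S -> C) : Prop :=
  (forall (c : k) (x : S), c != 0 -> x != 0 -> nu (c *: x) = nu x) /\
  (forall x y : S, x != 0 -> y != 0 -> x + y != 0 ->
     (nu (x + y) <= Order.max (nu x) (nu y))%O).

Definition lin_indep (k : fieldType) (S : lmodType k) (B : S -> Prop) : Prop :=
  forall (s : seq S) (c : S -> k), uniq s -> (forall b, b \in s -> B b) ->
    \sum_(b <- s) c b *: b = 0 -> forall b, b \in s -> c b = 0.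

Definition spans (k : fieldType) (S : lmodType k) (B : S -> Prop) : Prop :=
  forall x : S, exists (s : seq S) (c : S -> k),
    (forall b, b \in s -> B b) /\ x = \sum_(b <- s) c b *: b.

Definition is_basis (k : fieldType) (S : lmodType k) (B : S -> Prop) : Prop :=
  lin_indep B /\ spans B.

Definition adapted (k : fieldType) (S : lmodType k) (d : Order.disp_t)
  (C : orderType d) (nu : S -> C) (B : S -> Prop) : Prop :=
  is_basis B /\ (forall b1 b2, B b1 -> B b2 -> nu b1 = nu b2 -> b1 = b2).

Definition injective_valuation (k : fieldType) (S : lmodType k)
  (d : Order.disp_t) (C : orderType d) (nu : S -> C) : Prop :=
  is_valuation nu /\ exists B, adapted nu B.

Definition val_image (k : fieldType) (S : lmodType k) (d : Order.disp_t)
  (C : orderType d) (nu : S -> C) (a : C) : Prop :=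
  exists x : S, x != 0 /\ nu x = a.

From mathcomp Require Import all_boot all_order all_algebra.
From Stdlib Require Import ClassicalEpsilon.

Set Implicit Arguments.
Unset Strict Implicit.
Unset Printing Implicit Defensive.

Import Order.TTheory GRing.Theory.
Local Open Scope ring_scope.

(* Write x != 0 in a basis B adapted to both valuations.  The values nu b of
   the support vectors are pairwise distinct, so nu x is the largest of them,
   attained at a unique support vector b, while nu' x is the largest of their
   nu' values and so dominates nu' b.  Thus nu' b is the minimum of nu' on the
   fibre of nu through x.  Both valuations are read off the same basis vector,
   so this minimum map is a bijection of the value sets, and its
   characterisation as a minimum makes it independent of the basis. *)

Section Valuation.

Variables (k : fieldType) (S : lmodType k) (d : Order.disp_t) (C : orderType d).
Variables (nu : S -> C).
Hypothesis nu_val : is_valuation nu.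

Lemma valuationN (x : S) : x != 0 -> nu (- x) = nu x.
Proof. by move=> x0; rewrite -scaleN1r nu_val.1 // oppr_eq0 oner_eq0. Qed.

Lemma valuationD_lt (x y : S) : x != 0 -> y != 0 -> (nu x < nu y)%O ->
  x + y != 0 /\ nu (x + y) = nu y.
Proof.
move=> x0 y0 lt_xy.
have xy0 : x + y != 0.
  apply: contraTneq lt_xy => /eqP; rewrite addr_eq0 => /eqP ->.
  by rewrite valuationN // ltxx.
split=> //; apply/le_anti/andP; split.
  by have := nu_val.2 x y x0 y0 xy0; rewrite (max_idPr (ltW lt_xy)).
have := nu_val.2 (x + y) (- x) xy0; rewrite oppr_eq0 addrC addKr valuationN //.
move=> /(_ x0 y0); rewrite le_max => /orP[|le_yx] //.
by have := lt_le_trans lt_xy le_yx; rewrite ltxx.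
Qed.

Lemma valuation_sum_distinct (s : seq S) (c : S -> k) :
  uniq s -> s != [::] -> {in s &, injective nu} ->
  (forall b, b \in s -> b != 0 /\ c b != 0) ->
  \sum_(b <- s) c b *: b != 0 /\
  exists b, b \in s /\ nu (\sum_(b <- s) c b *: b) = nu b /\
            forall b', b' \in s -> (nu b' <= nu b)%O.
Proof.
elim: s => [//|a s IHs] /= /andP[a_s s_uniq] _ nu_inj s_nz.
have [a0 ca0] := s_nz a (mem_head _ _).
have ta0 : c a *: a != 0 by rewrite scaler_eq0 negb_or ca0.
have nu_ta : nu (c a *: a) = nu a by rewrite nu_val.1.
rewrite big_cons.
case: s IHs a_s s_uniq nu_inj s_nz => [|a1 s] IHs a_s s_uniq nu_inj s_nz.
  rewrite big_nil addr0; split=> //; exists a; split; first exact: mem_head.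
  by split=> // b'; rewrite inE => /eqP ->.
have sub_s b : b \in a1 :: s -> b \in a :: a1 :: s by move=> bs; rewrite inE bs orbT.
have [sum0 [m [ms [nu_sum max_m]]]] := IHs s_uniq isT
  (sub_in2 sub_s nu_inj) (fun b bs => s_nz b (sub_s b bs)).
have : nu a != nu m.
  by apply: contraNneq a_s => /nu_inj -> //; rewrite ?mem_head ?sub_s.
case: ltgtP => // cmp _.
- have [sumD0 nu_sumD] := valuationD_lt ta0 sum0 ltac:(by rewrite nu_ta nu_sum).
  split=> //; exists m; split; first exact: sub_s.
  split; first by rewrite nu_sumD.
  by move=> b'; rewrite inE => /orP[/eqP ->|/max_m]; first exact: ltW.
- have [sumD0 nu_sumD] := valuationD_lt sum0 ta0 ltac:(by rewrite nu_ta nu_sum).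
  rewrite addrC; split=> //; exists a; split; first exact: mem_head.
  split; first by rewrite nu_sumD.
  by move=> b'; rewrite inE => /orP[/eqP ->|/max_m/le_trans->] //; exact: ltW.
Qed.

End Valuation.

Section Basis.

Variables (k : fieldType) (S : lmodType k) (B : S -> Prop).
Hypothesis B_basis : is_basis B.

Lemma basis_neq0 (b : S) : B b -> b != 0.
Proof.
move=> Bb; apply/eqP => b0.
have Bs : forall b', b' \in [:: b] -> B b' by move=> b' /[!inE]/eqP ->.
have sum0 : \sum_(b' <- [:: b]) (fun=> 1 : k) b' *: b' = 0.
  by rewrite big_seq1 b0 scaler0.
by have /eqP := B_basis.1 [:: b] _ isT Bs sum0 b (mem_head _ _); rewrite oner_eq0.
Qed.

Lemma basis_decomposition (x : S) : x != 0 ->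
  exists (s : seq S) (c : S -> k), [/\ uniq s, s != [::],
    forall b, b \in s -> B b /\ c b != 0 & x = \sum_(b <- s) c b *: b].
Proof.
move=> x0; have [s0 [c0 [s0B x_eq]]] := B_basis.2 x.
pose c b := c0 b *+ count_mem b s0.
have merge : \sum_(b <- s0) c0 b *: b = \sum_(b <- undup s0 | c b != 0) c b *: b.
  rewrite -(big_undup_iterop_count _ s0 predT (fun b => c0 b *: b)).
  rewrite [LHS](bigID (fun b => c b != 0)) /= [X in _ + X]big1 ?addr0.
    by apply: eq_bigr => b _; rewrite /c -scalerMnl.
  move=> b /negPn/eqP cb0.
  by rewrite -[iterop _ _ _ _]/(_ *+ _) scalerMnl -/(c b) cb0 scale0r.
rewrite x_eq merge -big_filter in x0 *.
exists [seq b <- undup s0 | c b != 0], c; split=> //.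
- by rewrite filter_uniq ?undup_uniq.
- by apply: contraNneq x0 => ->; rewrite big_nil.
- by move=> b; rewrite mem_filter mem_undup => /andP[cb0 /s0B].
Qed.

End Basis.

Section TwoValuations.

Variables (k : fieldType) (S : lmodType k).
Variables (d : Order.disp_t) (C : orderType d) (d' : Order.disp_t) (C' : orderType d').
Variables (nu : S -> C) (nu' : S -> C').
Hypotheses (nu_val : is_valuation nu) (nu'_val : is_valuation nu').

Lemma adapted2_basis_below (B : S -> Prop) (x : S) :
  adapted nu B -> adapted nu' B -> x != 0 ->
  exists b, [/\ B b, nu b = nu x & (nu' b <= nu' x)%O].
Proof.
move=> [B_basis nuB_inj] [_ nu'B_inj] x0.
have [s [c [s_uniq s_nil sB ->]]] := basis_decomposition B_basis x0.
have s_nz b : b \in s -> b != 0 /\ c b != 0.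
  by move=> /sB[Bb cb0]; split=> //; apply: (basis_neq0 B_basis Bb).
have [_ [b [bs [nu_x _]]]] := valuation_sum_distinct nu_val s_uniq s_nil
  (fun b1 b2 b1s b2s => nuB_inj b1 b2 (sB b1 b1s).1 (sB b2 b2s).1) s_nz.
have [_ [b' [_ [nu'_x max_b']]]] := valuation_sum_distinct nu'_val s_uniq s_nil
  (fun b1 b2 b1s b2s => nu'B_inj b1 b2 (sB b1 b1s).1 (sB b2 b2s).1) s_nz.
by exists b; split; [exact: (sB b bs).1 | rewrite nu_x | rewrite nu'_x max_b'].
Qed.

Definition is_fiber_min (a : C) (m : C') :=
  (exists x : S, x != 0 /\ nu x = a /\ nu' x = m) /\
  (forall x : S, x != 0 -> nu x = a -> (m <= nu' x)%O).

Lemma is_fiber_min_unique (a : C) (m1 m2 : C') :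
  is_fiber_min a m1 -> is_fiber_min a m2 -> m1 = m2.
Proof.
move=> [[x1 [x10 [nu_x1 <-]]] min1] [[x2 [x20 [nu_x2 <-]]] min2].
by apply/le_anti; rewrite min1 ?min2.
Qed.

Lemma adapted2_fiber_min (B : S -> Prop) (b : S) :
  adapted nu B -> adapted nu' B -> B b -> is_fiber_min (nu b) (nu' b).
Proof.
move=> nuB nu'B Bb; split.
  by exists b; split=> //; apply: (basis_neq0 nuB.1 Bb).
move=> x x0 nu_x; have [b' [Bb' nu_b' le_b'x]] := adapted2_basis_below nuB nu'B x0.
by rewrite -(nuB.2 _ _ Bb' Bb) // nu_b'.
Qed.

End TwoValuations.

Theorem mainTheorem5 (k : fieldType) (S : lmodType k)
  (d : Order.disp_t) (C : orderType d) (d' : Order.disp_t) (C' : orderType d')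
  (nu : S -> C) (nu' : S -> C') :
  injective_valuation nu -> injective_valuation nu' ->
  (exists B : S -> Prop, adapted nu B /\ adapted nu' B) ->
  exists K : C -> C',
    (forall a, val_image nu a ->
       (exists x : S, x != 0 /\ nu x = a /\ nu' x = K a) /\
       (forall x : S, x != 0 -> nu x = a -> (K a <= nu' x)%O)) /\
    (forall a, val_image nu a -> val_image nu' (K a)) /\
    (forall a1 a2, val_image nu a1 -> val_image nu a2 -> K a1 = K a2 -> a1 = a2) /\
    (forall a', val_image nu' a' -> exists a, val_image nu a /\ K a = a') /\
    (forall B : S -> Prop, adapted nu B -> adapted nu' B ->
       forall b, B b -> nu' b = K (nu b)).
Proof.
move=> [nu_val _] [nu'_val _] [B0 [nuB0 nu'B0]].
pose K a := epsilon (inhabits (nu' 0)) (is_fiber_min nu nu' a).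
have K_basis B : adapted nu B -> adapted nu' B -> forall b, B b -> nu' b = K (nu b).
  move=> nuB nu'B b Bb; have min_b := adapted2_fiber_min nu_val nu'_val nuB nu'B Bb.
  by apply: is_fiber_min_unique min_b (epsilon_spec _ _ (ex_intro _ _ min_b)).
have image_basis a : val_image nu a -> exists2 b, B0 b & nu b = a.
  case=> x [x0 <-].
  by have [b []] := adapted2_basis_below nu_val nu'_val nuB0 nu'B0 x0; exists b.
have K_min a : val_image nu a -> is_fiber_min nu nu' a (K a).
  case/image_basis=> b Bb <-; rewrite -(K_basis B0 nuB0 nu'B0 b Bb).
  exact: (adapted2_fiber_min nu_val nu'_val nuB0 nu'B0 Bb).
exists K; split; first exact: K_min.
split; first by move=> a /K_min[[x [x0 [_ <-]]] _]; exists x.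
split.
  move=> _ _ /image_basis[b1 Bb1 <-] /image_basis[b2 Bb2 <-].
  by rewrite -!(K_basis B0) // => /(nu'B0.2 _ _ Bb1 Bb2) ->.
split; last exact: K_basis.
move=> _ [x [x0 <-]].
have [b [Bb nu'_b _]] := adapted2_basis_below nu'_val nu_val nu'B0 nuB0 x0.
exists (nu b); split; last by rewrite -(K_basis B0).
by exists b; split=> //; apply: (basis_neq0 nuB0.1 Bb).
Qed.
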